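(* For every integer $m\ge 0$ and every real $a>-1$, $$\int_0^\infty\frac{dx}{(x^4+2ax^2+1)^{m+1}}=\frac{\pi}{2}\,\frac{P_m(a)}{[2(a+1)]^{m+1/2}},$$ where $$P_m(a)=\frac{(1/2)_m}{((2m)!)^2}\sum_{i=0}^m\frac{(2m-2i)!\,(2m+2i)!}{(m+1/2)_i\,(m-i)!}\binom{m}{i}\left(\frac{a+1}{2}\right)^{i}.$$ Equivalently, $P_m(a)=\sum_{j=0}^m d_{j,m}a^j$ with $$d_{j,m}=\frac{(1/2)_m}{((2m)!)^2}\sum_{i=j}^m\frac{(2m-2i)!\,(2m+2i)!}{(m+1/2)_i\,(m-i)!\,2^{i}}\binom{m}{i}\binom{i}{j}.$$
   Context: $(c)_k$ denotes the Pochhammer symbol (rising factorial): $(c)_0=1$, $(c)_k=c(c+1)\cdots(c+k-1)$ for $k\ge 1$. *)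

From Stdlib Require Import Reals Lra Arith Factorial.
Open Scope R_scope.

Fixpoint poch (c : R) (k : nat) : R :=
  match k with
  | O => 1
  | S k' => poch c k' * (c + INR k')
  end.

Definition improper_int_0_inf (f : R -> R) (l : R) : Prop :=
  (forall b : R, 0 <= b -> inhabited (Riemann_integrable f 0 b)) /\
  (forall eps : R, eps > 0 -> exists M : R, forall (b : R) (pr : Riemann_integrable f 0 b),
      b >= M -> Rabs (RiemannInt pr - l) < eps).

Definition Pm (m : nat) (a : R) : R :=
  poch (/2) m / (INR (fact (2*m)))^2 *
  sum_f_R0 (fun i =>
    INR (fact (2*m - 2*i)) * INR (fact (2*m + 2*i))
      / (poch (INR m + /2) i * INR (fact (m - i)))
      * C m i * ((a + 1) / 2)^i) m.

Definition dcoef (j m : nat) : R :=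
  poch (/2) m / (INR (fact (2*m)))^2 *
  sum_f_R0 (fun k => let i := (j + k)%nat in
    INR (fact (2*m - 2*i)) * INR (fact (2*m + 2*i))
      / (poch (INR m + /2) i * INR (fact (m - i)) * 2^i)
      * C m i * C i j) (m - j).

(* Write Q(x) = x^4 + 2 a x^2 + 1 = (1 - x^2)^2 + rho^2 x^2 with rho = sqrt (2 (a + 1)),
   and I(j, N) for the integral over [0, +oo) of x^(2j) / Q(x)^N.  Every integral is
   obtained from an explicit primitive vanishing at 0 and having a limit at +oo.
   The substitution v = x - 1/x turns (1 + x^2)/Q dx into dv / (v^2 + rho^2), so
   I(0,1) + I(1,1) = pi / rho.  Differentiating the boundary terms x^(2j+1) / Q^N gives
   linear relations between the I(j, N), and the substitution t = x / (1 + x^2), which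
   runs from 0 to 1/2 and back to 0, gives I(n+1, n+1) = I(n, n+1).  Together these give
   I(n, n+1) in closed form; further boundary terms lower the power of x, and the
   resulting recursion is solved by a binomial sum which for I(0, m+1) is P_m. *)

From Stdlib Require Import Reals Lra Lia Psatz Factorial.
From Coquelicot Require Import Coquelicot.
Open Scope R_scope.

(** * Improper primitives *)

Definition has_improper_primitive (f : R -> R) (l : R) : Prop :=
  exists F : R -> R,
    F 0 = 0 /\ (forall x, is_derive F x (f x)) /\ is_lim F p_infty l.

Lemma has_improper_primitive_ext (f g : R -> R) (l l' : R) :
  (forall x, f x = g x) -> l = l' ->
  has_improper_primitive f l -> has_improper_primitive g l'.
Proof.
  intros Efg <- (F & F0 & dF & limF).
  exists F; split; [exact F0 | split; [|exact limF]].
  intros x; rewrite <- Efg; apply dF.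
Qed.

Lemma has_improper_primitive_plus (f g : R -> R) (lf lg : R) :
  has_improper_primitive f lf -> has_improper_primitive g lg ->
  has_improper_primitive (fun x => f x + g x) (lf + lg).
Proof.
  intros (F & F0 & dF & limF) (G & G0 & dG & limG).
  exists (fun x => F x + G x); split; [|split].
  - rewrite F0, G0; ring.
  - intros x; apply (is_derive_plus F G); auto.
  - apply is_lim_plus'; auto.
Qed.

Lemma has_improper_primitive_scal (k : R) (f : R -> R) (l : R) :
  has_improper_primitive f l ->
  has_improper_primitive (fun x => k * f x) (k * l).
Proof.
  intros (F & F0 & dF & limF).
  exists (fun x => k * F x); split; [|split].
  - rewrite F0; ring.
  - intros x; apply is_derive_scal; auto.
  - apply (is_lim_scal_l F k p_infty l); auto.
Qed.

Lemma improper_int_of_primitive (f : R -> R) (l : R) :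
  (forall x, continuous f x) -> has_improper_primitive f l ->
  improper_int_0_inf f l.
Proof.
  intros contf (F & F0 & dF & limF); split.
  - intros b _; constructor; apply ex_RInt_Reals_0.
    apply (ex_RInt_continuous (V := R_CompleteNormedModule)); auto.
  - intros eps Heps.
    destruct (proj2 (is_lim_spec F p_infty l) limF (mkposreal eps Heps)) as [M HM].
    exists (Rmax M 0 + 1); intros b pr Hb.
    replace (RiemannInt pr) with (F b - F 0).
    + rewrite F0, Rminus_0_r; apply HM; pose proof (Rmax_l M 0); lra.
    + rewrite <- RInt_Reals; symmetry; apply is_RInt_unique.
      apply (is_RInt_derive F f); auto.
Qed.

Lemma is_derive_eq_value (f : R -> R) (x l l' : R) :
  is_derive f x l -> l = l' -> is_derive f x l'.
Proof. intros H <-; exact H. Qed.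

(** * Pochhammer symbols and binomial sums *)

Lemma poch_pos (c : R) (i : nat) : 0 < c -> 0 < poch c i.
Proof.
  intros Hc; induction i as [|i IH]; simpl; [lra|].
  pose proof (pos_INR i); apply Rmult_lt_0_compat; lra.
Qed.

Lemma poch_add (c : R) (m i : nat) : poch c (m + i) = poch c m * poch (c + INR m) i.
Proof.
  induction i as [|i IH]; [rewrite Nat.add_0_r; simpl; ring|].
  rewrite Nat.add_succ_r; simpl; rewrite IH, plus_INR; ring.
Qed.

Lemma poch_half (n : nat) : poch (/2) n = INR (fact (2*n)) / (4^n * INR (fact n)).
Proof.
  induction n as [|n IH]; [simpl; field|].
  simpl poch; rewrite IH.
  replace (2 * S n)%nat with (S (S (2*n))) by lia.
  rewrite !fact_simpl, !mult_INR, !S_INR, mult_INR; simpl (INR 2).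
  pose proof (INR_fact_neq_0 n); pose proof (INR_fact_neq_0 (2*n)); pose proof (pos_INR n).
  assert (0 < 4^n) by (apply pow_lt; lra).
  simpl pow; field; repeat split; lra.
Qed.

(* Unlike [Binomial.C], [binom] vanishes above the diagonal; [tsum_succ] needs this. *)
Definition binom (n k : nat) : R := if (k <=? n)%nat then Binomial.C n k else 0.

Lemma binom_succ_diff (n r : nat) : binom (S n) (S r) - binom n (S r) = binom n r.
Proof.
  unfold binom.
  destruct (Nat.leb_spec (S r) (S n)), (Nat.leb_spec (S r) n), (Nat.leb_spec r n);
    try lia.
  - rewrite <- pascal by lia; ring.
  - replace r with n by lia; unfold Binomial.C; rewrite !Nat.sub_diag.
    pose proof (INR_fact_neq_0 n); pose proof (INR_fact_neq_0 (S n)); simpl (fact 0).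
    field; split; [simpl; lra | auto].
  - ring.
Qed.

Lemma binom_absorb (n r : nat) : INR (S r) * binom (S n) (S r) = INR (S n) * binom n r.
Proof.
  unfold binom.
  destruct (Nat.leb_spec (S r) (S n)), (Nat.leb_spec r n); try lia; [|ring].
  unfold Binomial.C; simpl (S n - S r)%nat.
  rewrite !fact_simpl, !mult_INR.
  pose proof (INR_fact_neq_0 r); pose proof (INR_fact_neq_0 (n - r)).
  pose proof (INR_fact_neq_0 n); pose proof (pos_INR r).
  rewrite !S_INR; field; repeat split; lra.
Qed.

Lemma binom_succ_succ (m r : nat) :
  binom (S (S m)) (S (S r))
  = binom (S m) (S (S r)) + INR (S m) / INR (S r) * binom m r.
Proof.
  assert (INR (S r) <> 0) by (apply not_0_INR; lia).
  replace (INR (S m) / INR (S r) * binom m r) with (binom (S m) (S r))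
    by (apply (Rmult_eq_reg_l (INR (S r))); [rewrite binom_absorb; field|]; assumption).
  rewrite <- (binom_succ_diff (S m) (S r)); ring.
Qed.

Definition tsum_term (y : R) (n k i : nat) : R :=
  binom (k + i) (2 * i) * y ^ i * poch (/2) i * poch (/2) (n - i) / INR (fact n).

Definition tsum (y : R) (n k : nat) : R := sum_f_R0 (tsum_term y n k) k.

Lemma tsum_term_succ (y : R) (n k i : nat) : (i <= k)%nat -> (k <= n)%nat ->
  tsum_term y (S n) (S k) (S i) =
  (2 * INR (S n) + 2 * INR (S k) - 1) / (4 * INR (S n)) * y * tsum_term y n k i
  - y / 2 * tsum_term y (S n) k i + tsum_term y (S n) k (S i).
Proof.
  intros Hik Hkn; unfold tsum_term.
  replace (S k + S i)%nat with (S (S (k + i))) by lia.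
  replace (2 * S i)%nat with (S (S (2 * i))) by lia.
  replace (k + S i)%nat with (S (k + i)) by lia.
  replace (S n - i)%nat with (S (n - i)) by lia.
  rewrite binom_succ_succ; simpl (S n - S i)%nat; simpl poch; simpl pow.
  rewrite fact_simpl, mult_INR, !S_INR, minus_INR, plus_INR, mult_INR by lia.
  pose proof (INR_fact_neq_0 n); pose proof (pos_INR n); pose proof (pos_INR i).
  pose proof (pos_INR k); simpl (INR 2).
  field; repeat split; lra.
Qed.

Lemma tsum_0 (y : R) (n : nat) : tsum y n 0 = poch (/2) n / INR (fact n).
Proof.
  unfold tsum, tsum_term, binom; simpl; rewrite Nat.sub_0_r.
  unfold Binomial.C; simpl; field; apply INR_fact_neq_0.
Qed.

Lemma tsum_succ (y : R) (n k : nat) : (k <= n)%nat ->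
  tsum y (S n) (S k) =
  (2 * INR (S n) + 2 * INR (S k) - 1) / (4 * INR (S n)) * y * tsum y n k
  - (y / 2 - 1) * tsum y (S n) k.
Proof.
  intros Hkn; unfold tsum.
  assert (Hlast : tsum_term y (S n) k (S k) = 0).
  { unfold tsum_term, binom.
    destruct (Nat.leb_spec (2 * S k) (k + S k)); [lia | unfold Rdiv; ring]. }
  assert (Htail : sum_f_R0 (tsum_term y (S n) k) k
    = tsum_term y (S n) k 0 + sum_f_R0 (fun i => tsum_term y (S n) k (S i)) k).
  { transitivity (sum_f_R0 (tsum_term y (S n) k) (S k)).
    - change (sum_f_R0 (tsum_term y (S n) k) (S k))
        with (sum_f_R0 (tsum_term y (S n) k) k + tsum_term y (S n) k (S k)).
      rewrite Hlast; ring.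
    - rewrite decomp_sum by lia; reflexivity. }
  assert (Hhead : tsum_term y (S n) (S k) 0 = tsum_term y (S n) k 0).
  { unfold tsum_term, binom; simpl (2 * 0)%nat; rewrite !Nat.add_0_r.
    destruct (Nat.leb_spec 0 (S k)), (Nat.leb_spec 0 k); try lia.
    unfold Binomial.C; rewrite !Nat.sub_0_r.
    field; repeat split; apply INR_fact_neq_0. }
  rewrite decomp_sum by lia; simpl pred.
  rewrite Hhead, Htail.
  rewrite (sum_eq _ (fun i =>
      tsum_term y n k i * ((2 * INR (S n) + 2 * INR (S k) - 1) / (4 * INR (S n)) * y)
      - tsum_term y (S n) k i * (y / 2) + tsum_term y (S n) k (S i)))
    by (intros i Hi; rewrite tsum_term_succ by lia; ring).
  rewrite plus_sum, minus_sum, <- !scal_sum.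
  rewrite Htail; ring.
Qed.

Lemma Pm_term_eq (a : R) (m i : nat) : (i <= m)%nat ->
  tsum_term (2 * (a + 1)) m m i =
  poch (/2) m / INR (fact (2*m))^2 *
    (INR (fact (2*m - 2*i)) * INR (fact (2*m + 2*i))
      / (poch (INR m + /2) i * INR (fact (m - i)))
      * Binomial.C m i * ((a + 1) / 2)^i).
Proof.
  intros Him; destruct (Nat.le_exists_sub i m Him) as [j [-> _]].
  unfold tsum_term, binom, Binomial.C.
  destruct (Nat.leb_spec (2*i) (j + i + i)); [|lia].
  assert (Hp : poch (INR (j + i) + /2) i = poch (/2) (j + i + i) / poch (/2) (j + i)).
  { rewrite poch_add, Rplus_comm.
    pose proof (poch_pos (/2) (j + i) ltac:(lra)); field; lra. }
  rewrite Hp.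
  replace (j + i + i - 2*i)%nat with j by lia.
  replace (j + i - i)%nat with j by lia.
  replace (2*(j+i) - 2*i)%nat with (2*j)%nat by lia.
  replace (2*(j+i) + 2*i)%nat with (2*(j+(i+i)))%nat by lia.
  replace (j + i + i)%nat with (j + (i + i))%nat by lia.
  rewrite !poch_half.
  replace (2 * (a + 1)) with (4 * ((a + 1) / 2)) by field.
  rewrite Rpow_mult_distr, !(pow_add 4).
  pose proof (INR_fact_neq_0 j); pose proof (INR_fact_neq_0 i).
  pose proof (INR_fact_neq_0 (2*j)); pose proof (INR_fact_neq_0 (2*i)).
  pose proof (INR_fact_neq_0 (j+i)); pose proof (INR_fact_neq_0 (2*(j+i))).
  pose proof (INR_fact_neq_0 (j+(i+i))); pose proof (INR_fact_neq_0 (2*(j+(i+i)))).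
  assert (0 < 4^i) by (apply pow_lt; lra); assert (0 < 4^j) by (apply pow_lt; lra).
  field; repeat split; lra.
Qed.

Lemma Pm_tsum (m : nat) (a : R) : Pm m a = tsum (2 * (a + 1)) m m.
Proof.
  unfold Pm, tsum; rewrite scal_sum.
  apply sum_eq; intros i Hi; rewrite Pm_term_eq by exact Hi; ring.
Qed.

Lemma sum_f_R0_triangle_swap (f : nat -> nat -> R) (m : nat) :
  sum_f_R0 (fun i => sum_f_R0 (fun j => f i j) i) m =
  sum_f_R0 (fun j => sum_f_R0 (fun k => f (j + k)%nat j) (m - j)) m.
Proof.
  induction m as [|m IH]; [reflexivity|].
  cbn [sum_f_R0]; rewrite IH, Nat.sub_diag; cbn [sum_f_R0]; rewrite Nat.add_0_r.
  rewrite (sum_eq (fun j => sum_f_R0 (fun k => f (j + k)%nat j) (S m - j))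
                  (fun j => sum_f_R0 (fun k => f (j + k)%nat j) (m - j) + f (S m) j)).
  - rewrite plus_sum, Rplus_assoc; reflexivity.
  - intros j Hj; replace (S m - j)%nat with (S (m - j)) by lia; simpl.
    replace (j + S (m - j))%nat with (S m) by lia; reflexivity.
Qed.

Lemma Pm_dcoef (m : nat) (a : R) : Pm m a = sum_f_R0 (fun j => dcoef j m * a^j) m.
Proof.
  unfold Pm, dcoef.
  set (A := fun i => INR (fact (2*m - 2*i)) * INR (fact (2*m + 2*i))
      / (poch (INR m + /2) i * INR (fact (m - i)))).
  assert (HA : forall i, INR (fact (2*m - 2*i)) * INR (fact (2*m + 2*i))
      / (poch (INR m + /2) i * INR (fact (m - i)) * 2^i) = A i / 2^i).
  { intros i; unfold A.
    assert (0 < poch (INR m + /2) i) by (apply poch_pos; pose proof (pos_INR m); lra).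
    assert (0 < 2^i) by (apply pow_lt; lra); pose proof (INR_fact_neq_0 (m - i)).
    field; repeat split; lra. }
  rewrite (sum_eq (fun i => A i * Binomial.C m i * ((a + 1) / 2)^i)
      (fun i => sum_f_R0 (fun j => A i / 2^i * Binomial.C m i * Binomial.C i j * a^j) i)).
  - rewrite sum_f_R0_triangle_swap, scal_sum.
    apply sum_eq; intros j _.
    match goal with |- _ = _ * sum_f_R0 ?R _ * _ =>
      rewrite (sum_eq R (fun k => A (j + k)%nat / 2^(j + k) * Binomial.C m (j + k)
                                  * Binomial.C (j + k) j))
        by (intros; rewrite HA; reflexivity) end.
    rewrite <- (scal_sum _ (m - j) (a^j)); ring.
  - intros i _.
    replace (((a + 1) / 2)^i) with ((a + 1)^i / 2^i)
      by (unfold Rdiv; rewrite Rpow_mult_distr, pow_inv; reflexivity).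
    rewrite binomial; set (S := sum_f_R0 _ i).
    replace (A i * Binomial.C m i * (S / 2^i)) with (A i / 2^i * Binomial.C m i * S)
      by (field; apply pow_nonzero; lra).
    unfold S; rewrite scal_sum.
    apply sum_eq; intros j _; rewrite pow1; ring.
Qed.

(** * The integrals of x^(2j) / Q^N *)

Definition Q (a x : R) : R := x^4 + 2*a*x^2 + 1.

Definition J (a : R) (j N : nat) (x : R) : R := x^(2*j) / Q a x ^ N.

Lemma Q_pos (a x : R) : a > -1 -> 0 < Q a x.
Proof.
  intros Ha; unfold Q.
  assert (0 <= x^2) by nra.
  replace (x^4) with (x^2 * x^2) by ring.
  set (t := x^2) in *.
  destruct (Rle_dec 0 a).
  - assert (0 <= a * t) by (apply Rmult_le_pos; lra); nra.
  - assert (0 <= (t + a) * (t + a)) by apply Rle_0_sqr; nra.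
Qed.

Lemma is_derive_Q (a x : R) : is_derive (Q a) x (4 * x^3 + 4 * a * x).
Proof. unfold Q; auto_derive; [easy | ring]. Qed.

Lemma is_derive_pow_div_Q (a : R) (p N : nat) (x : R) : a > -1 ->
  is_derive (fun y => y^(S p) / Q a y ^ N) x
    (INR (S p) * x^p / Q a x ^ N
     - INR N * (4 * x^3 + 4 * a * x) * x^(S p) / Q a x ^ (S N)).
Proof.
  intros Ha; assert (HQ := Q_pos a x Ha).
  eapply is_derive_eq_value.
  - apply is_derive_div.
    + apply (is_derive_pow (fun y => y)); auto_derive; [easy | reflexivity].
    + apply is_derive_pow, is_derive_Q.
    + apply pow_nonzero; lra.
  - destruct N as [|N]; simpl pred; simpl pow.
    + simpl INR; field; lra.
    + field; split; [apply pow_nonzero |]; lra.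
Qed.

Lemma is_derive_odd_pow_div_Q (a : R) (j N : nat) (x : R) : a > -1 ->
  is_derive (fun y => y^(2*j+1) / Q a y ^ N) x
    ((2 * INR j + 1) * J a j N x
     - 4 * INR N * (J a (j+2) (N+1) x + a * J a (j+1) (N+1) x)).
Proof.
  intros Ha; assert (HQ := Q_pos a x Ha).
  assert (HQN : 0 < Q a x ^ N) by (apply pow_lt; lra).
  replace (2*j+1)%nat with (S (2*j)) by lia.
  eapply is_derive_eq_value.
  - apply is_derive_pow_div_Q, Ha.
  - unfold J.
    replace (2 * (j+2))%nat with (S (2*j) + 3)%nat by lia.
    replace (2 * (j+1))%nat with (S (2*j) + 1)%nat by lia.
    rewrite S_INR, mult_INR, !pow_add.
    simpl (INR 2); simpl pow; field; lra.
Qed.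

Lemma pow_div_Q_bound (a : R) (p N : nat) (x : R) : a > -1 ->
  (p + 1 <= 4 * N)%nat -> 2 <= x -> 0 <= x^p / Q a x ^ N <= 2^N / x.
Proof.
  intros Ha HpN Hx.
  assert (HQ := Q_pos a x Ha).
  assert (Hx4 : x^4 / 2 <= Q a x).
  { unfold Q; assert (4 <= x^2) by nra; replace (x^4) with (x^2 * x^2) by ring; nra. }
  assert (HQN : (x^4 / 2)^N <= Q a x ^ N).
  { apply pow_incr; split; [apply Rlt_le, Rdiv_lt_0_compat; [apply pow_lt|]|]; lra. }
  assert (Hpow : x^p * x <= x^(4*N)).
  { rewrite <- (pow_1 x) at 2; rewrite <- pow_add; apply Rle_pow; lra || lia. }
  assert (0 < x^p) by (apply pow_lt; lra).
  assert (0 < 2^N) by (apply pow_lt; lra).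
  assert (0 < (x^4 / 2)^N) by (apply pow_lt, Rdiv_lt_0_compat; [apply pow_lt|]; lra).
  split; [apply Rlt_le, Rdiv_lt_0_compat; [|apply pow_lt]; lra|].
  apply Rle_trans with (x^p / (x^4 / 2)^N).
  - apply Rmult_le_compat_l; [lra|]; apply Rinv_le_contravar; lra.
  - unfold Rdiv; rewrite Rpow_mult_distr, pow_inv, <- pow_mult, Rinv_mult, Rinv_inv.
    apply Rmult_le_reg_r with (x * x^(4*N)); [apply Rmult_lt_0_compat; [|apply pow_lt]; lra|].
    replace (x^p * (/ x^(4*N) * 2^N) * (x * x^(4*N))) with (2^N * (x^p * x))
      by (field; apply pow_nonzero; lra).
    replace (2^N * / x * (x * x^(4*N))) with (2^N * x^(4*N)) by (field; lra).
    apply Rmult_le_compat_l; lra.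
Qed.

Lemma is_lim_pow_div_Q (a : R) (p N : nat) : a > -1 -> (p + 1 <= 4 * N)%nat ->
  is_lim (fun x => x^p / Q a x ^ N) p_infty 0.
Proof.
  intros Ha HpN.
  apply is_lim_le_le_loc with (f := fun _ => 0) (g := fun x => 2^N * / x).
  - exists 2; intros x Hx; rewrite <- Rdiv_def; apply pow_div_Q_bound; lra || auto.
  - apply is_lim_const.
  - replace 0 with (2^N * 0) at 1 by ring.
    apply (is_lim_scal_l (fun x => / x) (2^N) p_infty 0).
    apply (is_lim_inv (fun x => x) p_infty p_infty); [apply is_lim_id | discriminate].
Qed.

Definition rho (a : R) : R := sqrt (2 * (a + 1)).

Lemma rho_pos (a : R) : a > -1 -> 0 < rho a.
Proof. intros; apply sqrt_lt_R0; lra. Qed.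

Lemma rho_sqr (a : R) : a > -1 -> rho a * rho a = 2 * (a + 1).
Proof. intros; apply sqrt_sqrt; lra. Qed.

Lemma Rpower_rho (a : R) (m : nat) : a > -1 ->
  Rpower (2 * (a + 1)) (INR m + /2) = rho a ^ (2*m+1).
Proof.
  intros Ha.
  rewrite Rpower_plus, Rpower_pow, Rpower_sqrt by lra.
  rewrite pow_add, pow_mult, pow_1.
  replace (rho a ^ 2) with (rho a * rho a) by ring.
  rewrite rho_sqr by exact Ha; reflexivity.
Qed.

Definition atan_den (a x : R) : R := 1 - x^2 + sqrt (Q a x).

Lemma atan_den_pos (a x : R) : a > -1 -> 0 < atan_den a x.
Proof.
  intros Ha; unfold atan_den.
  assert (HQ := Q_pos a x Ha).
  destruct (Rle_dec (x^2) 1); [pose proof (sqrt_lt_R0 _ HQ); lra|].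
  assert (HQsq : (x^2 - 1)^2 < Q a x).
  { unfold Q; assert (0 < x^2) by nra; nra. }
  apply sqrt_lt_1 in HQsq; [|nra|lra].
  rewrite sqrt_pow2 in HQsq; lra.
Qed.

Lemma atan_den_le (a x : R) : a > -1 -> atan_den a x <= 2 + Rabs a.
Proof.
  intros Ha; unfold atan_den.
  assert (0 <= x^2) by nra; pose proof (Rle_abs a); pose proof (Rabs_pos a).
  assert (sqrt (Q a x) <= x^2 + Rabs a + 1); [|lra].
  rewrite <- (sqrt_pow2 (x^2 + Rabs a + 1)) by lra.
  apply sqrt_le_1_alt; unfold Q; nra.
Qed.

(* 2 atan (rho x / (1 - x^2 + sqrt Q)) is the branch of atan ((x^2 - 1) / (rho x)) + PI/2
   that is smooth at 0 (half-angle formula); the latter comes from v = x - 1/x. *)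
Lemma is_derive_atan_primitive (a x : R) : a > -1 ->
  is_derive (fun y => 2 / rho a * atan (rho a * y / atan_den a y)) x ((1 + x^2) / Q a x).
Proof.
  intros Ha.
  assert (HD := atan_den_pos a x Ha); assert (HQ := Q_pos a x Ha).
  assert (Hc := rho_pos a Ha); assert (Hcc := rho_sqr a Ha).
  assert (Hs := sqrt_sqrt _ (Rlt_le _ _ HQ)); assert (Hsp := sqrt_lt_R0 _ HQ).
  unfold atan_den, Q in *; set (c := rho a) in *.
  auto_derive.
  - simpl in HQ, HD; repeat split; lra.
  - simpl in HQ, HD, Hs; set (s := sqrt _) in *; clearbody s.
    assert (0 < (1 - x * x + s)^2) by (apply pow_lt; lra).
    field_simplify_eq.
    + replace (c^3) with (c * (c * c)) by ring; replace (s^3) with (s * (s * s)) by ring.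
      replace (s^2) with (s * s) by ring; rewrite Hcc, Hs; ring.
    + repeat split; nra.
Qed.

Lemma is_lim_atan_p_infty : is_lim atan p_infty (PI / 2).
Proof.
  apply is_lim_spec; intros eps.
  set (e := Rmin (eps / 2) (PI / 4)).
  assert (HPI := PI_RGT_0); pose proof (cond_pos eps).
  assert (0 < e) by (apply Rmin_pos; lra).
  assert (e <= PI / 4) by apply Rmin_r; assert (e <= eps / 2) by apply Rmin_l.
  exists (tan (PI / 2 - e)); intros x Hx.
  apply atan_increasing in Hx; rewrite atan_tan in Hx by lra.
  pose proof (atan_bound x); rewrite Rabs_left1; lra.
Qed.

Lemma has_improper_primitive_1_plus_sqr_div_Q (a : R) : a > -1 ->
  has_improper_primitive (fun x => (1 + x^2) / Q a x) (PI / rho a).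
Proof.
  intros Ha.
  assert (Hc := rho_pos a Ha); pose proof (Rabs_pos a).
  exists (fun y => 2 / rho a * atan (rho a * y / atan_den a y)); split; [|split].
  - rewrite Rmult_0_r; unfold Rdiv at 2; rewrite Rmult_0_l, atan_0; ring.
  - intros x; apply is_derive_atan_primitive, Ha.
  - replace (PI / rho a) with (2 / rho a * (PI / 2)) by (field; lra).
    apply (is_lim_scal_l _ (2 / rho a) p_infty (PI / 2)).
    apply (is_lim_comp atan _ p_infty (PI / 2) p_infty).
    + apply is_lim_atan_p_infty.
    + apply is_lim_le_p_loc with (f := fun y => rho a / (2 + Rabs a) * y).
      * exists 0; intros y Hy.
        assert (HD := atan_den_pos a y Ha); assert (HD' := atan_den_le a y Ha).
        replace (rho a / (2 + Rabs a) * y) with (rho a * y * / (2 + Rabs a)) by (field; lra).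
        apply Rmult_le_compat_l; [nra|]; apply Rinv_le_contravar; lra.
      * assert (Hk : Rbar_mult (rho a / (2 + Rabs a)) p_infty = p_infty).
        { apply is_Rbar_mult_unique, is_Rbar_mult_sym, is_Rbar_mult_p_infty_pos.
          apply Rdiv_lt_0_compat; lra. }
        rewrite <- Hk at 2; apply is_lim_scal_l, is_lim_id.
    + exists 0; intros; discriminate.
Qed.

Lemma x_div_1_plus_sqr_bound (x : R) : -1/2 <= x / (1 + x^2) <= 1/2.
Proof.
  assert (0 < 1 + x^2) by nra.
  pose proof (pow2_ge_0 (x + 1)); pose proof (pow2_ge_0 (x - 1)).
  split; apply Rmult_le_reg_r with (1 + x^2); try lra;
    unfold Rdiv; rewrite ?Rmult_assoc, Rinv_l by lra; lra.
Qed.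

Lemma is_lim_x_div_1_plus_sqr : is_lim (fun x => x / (1 + x^2)) p_infty 0.
Proof.
  apply is_lim_le_le_loc with (f := fun _ => 0) (g := fun x => / x).
  - exists 0; intros x Hx.
    assert (0 < 1 + x^2) by nra.
    split; [apply Rlt_le, Rdiv_lt_0_compat; lra|].
    replace (/ x) with (x / x^2) by (field; lra).
    apply Rmult_le_compat_l; [lra|]; apply Rinv_le_contravar; nra.
  - apply is_lim_const.
  - apply (is_lim_inv (fun x => x) p_infty p_infty); [apply is_lim_id | discriminate].
Qed.

(* The primitive is Phi 0 - Phi (x / (1 + x^2)) with Phi' = g: as x runs over [0, +oo),
   x / (1 + x^2) goes from 0 to 1/2 and back to 0. *)
Lemma has_improper_primitive_subst_x_div_1_plus_sqr (g : R -> R) :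
  (forall t, -1/2 <= t <= 1/2 -> continuity_pt g t) ->
  has_improper_primitive (fun x => (x^2 - 1) / (1 + x^2)^2 * g (x / (1 + x^2))) 0.
Proof.
  intros Hg.
  assert (Hle : -1/2 <= 1/2) by lra.
  set (Phi := primitive Hle (FTC_P1 Hle Hg)).
  assert (dPhi : forall t, -1/2 <= t <= 1/2 -> is_derive Phi t (g t)).
  { intros t Ht; apply is_derive_Reals, RiemannInt_P28, Ht. }
  exists (fun x => Phi 0 - Phi (x / (1 + x^2))); split; [|split].
  - replace (0 / (1 + 0^2)) with 0 by (simpl; field); ring.
  - intros x; assert (0 < 1 + x^2) by nra.
    assert (Dx := dPhi _ (x_div_1_plus_sqr_bound x)).
    auto_derive.
    + repeat split; [exists (g (x / (1 + x^2))); exact Dx | lra].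
    + replace (Derive _ _) with (g (x / (1 + x^2))) by (symmetry; apply is_derive_unique, Dx).
      field; lra.
  - replace 0 with (Phi 0 - Phi 0) at 1 by ring.
    apply is_lim_minus'; [apply is_lim_const|].
    apply (is_lim_comp_continuous (fun x => x / (1 + x^2)) Phi p_infty 0).
    + apply is_lim_x_div_1_plus_sqr.
    + apply (ex_derive_continuous (V := R_NormedModule)); exists (g 0); apply dPhi; lra.
Qed.

Lemma has_improper_primitive_J_sym (a : R) (n : nat) : a > -1 ->
  has_improper_primitive (fun x => J a (n+1) (n+1) x - J a n (n+1) x) 0.
Proof.
  intros Ha.
  set (g := fun t => t^(2*n) / (1 - (2 - 2*a) * t^2)^(n+1)).
  apply has_improper_primitive_ext with
    (f := fun x => (x^2 - 1) / (1 + x^2)^2 * g (x / (1 + x^2))) (l := 0); [|reflexivity|].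
  - intros x; unfold g, J.
    assert (HQ := Q_pos a x Ha); assert (0 < 1 + x^2) by nra.
    replace (1 - (2 - 2*a) * (x / (1 + x^2))^2) with (Q a x / (1 + x^2)^2)
      by (unfold Q; field; lra).
    unfold Rdiv; rewrite !Rpow_mult_distr, !pow_inv, <- !pow_mult.
    replace (2 * (n+1))%nat with (2*n + 2)%nat by lia.
    rewrite !pow_add.
    assert (0 < Q a x ^ n) by (apply pow_lt; lra).
    assert (0 < (1 + x^2) ^ (2*n)) by (apply pow_lt; lra).
    field; repeat split; lra.
  - apply has_improper_primitive_subst_x_div_1_plus_sqr; intros t Ht.
    assert (t^2 <= 1/4) by nra.
    assert (0 < 1 - (2 - 2*a) * t^2) by (destruct (Rle_dec 0 (2 - 2*a)); nra).
    apply continuity_pt_filterlim, (ex_derive_continuous (V := R_NormedModule)).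
    unfold g; auto_derive; simpl in *; repeat split; try lra.
    apply pow_nonzero; lra.
Qed.

Lemma J_pow_succ (a : R) (j N : nat) (x : R) : J a (S j) N x = x^2 * J a j N x.
Proof.
  unfold J; replace (2 * S j)%nat with (2 + 2*j)%nat by lia.
  rewrite pow_add; unfold Rdiv; ring.
Qed.

Lemma J_deg_succ (a : R) (j N : nat) (x : R) : a > -1 ->
  J a j (S N) x = J a j N x / Q a x.
Proof.
  intros Ha; assert (HQ := Q_pos a x Ha).
  unfold J; simpl; field; split; [apply pow_nonzero|]; lra.
Qed.

Lemma has_improper_primitive_odd_boundary (a : R) (j N : nat) : a > -1 ->
  (2*j + 2 <= 4*N)%nat ->
  has_improper_primitive (fun x => (2 * INR j + 1) * J a j N x
    - 4 * INR N * (J a (j+2) (N+1) x + a * J a (j+1) (N+1) x)) 0.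
Proof.
  intros Ha HjN.
  exists (fun y => y^(2*j+1) / Q a y ^ N); split; [|split].
  - rewrite pow_add, pow_1, Rmult_0_r; unfold Rdiv; ring.
  - intros x; apply is_derive_odd_pow_div_Q, Ha.
  - apply is_lim_pow_div_Q; [exact Ha | lia].
Qed.

Ltac J_simpl :=
  rewrite ?Nat.add_succ_r, ?Nat.add_0_r, ?J_pow_succ, ?J_deg_succ by assumption.

Lemma has_improper_primitive_J_pair (a : R) (n : nat) : a > -1 ->
  has_improper_primitive (fun x => J a n (n+1) x + J a (n+1) (n+1) x)
    (PI * poch (/2) n / (INR (fact n) * rho a ^ (2*n+1))).
Proof.
  intros Ha.
  assert (Hc := rho_pos a Ha); assert (Hcc := rho_sqr a Ha).
  induction n as [|k IH].
  - apply has_improper_primitive_ext with (f := fun x => (1 + x^2) / Q a x) (l := PI / rho a).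
    + intros x; J_simpl; unfold J; simpl; field; apply Rgt_not_eq, Q_pos, Ha.
    + simpl; field; lra.
    + apply has_improper_primitive_1_plus_sqr_div_Q, Ha.
  - (* The two boundary terms combine into the derivative of (x^2 - 1) x^(2k+1) / Q^(k+1). *)
    set (N := (k + 1)%nat).
    apply has_improper_primitive_ext with
      (f := fun x => / (2 * INR N * (rho a * rho a)) *
         ((2 * INR k + 1) * (J a k (k+1) x + J a (k+1) (k+1) x)
          + (((2 * INR (k+1) + 1) * J a (k+1) N x
              - 4 * INR N * (J a (k+1+2) (N+1) x + a * J a (k+1+1) (N+1) x))
             + -1 * ((2 * INR k + 1) * J a k N x
              - 4 * INR N * (J a (k+2) (N+1) x + a * J a (k+1) (N+1) x)))))
      (l := / (2 * INR N * (rho a * rho a)) * ((2 * INR k + 1) *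
              (PI * poch (/2) k / (INR (fact k) * rho a ^ (2*k+1))) + (0 + -1 * 0))).
    + intros x; unfold N; J_simpl.
      assert (HQ := Q_pos a x Ha).
      rewrite Hcc, S_INR.
      pose proof (pos_INR k); unfold Q in *; field; lra.
    + unfold N; rewrite Hcc, plus_INR; simpl (INR 1).
      replace (2 * S k + 1)%nat with (2*k + 1 + 2)%nat by lia.
      rewrite (pow_add (rho a) (2*k+1) 2), fact_simpl, mult_INR, S_INR; simpl (poch _ (S k)).
      replace (rho a ^ 2) with (2 * (a + 1)) by (rewrite <- Hcc; ring).
      assert (0 < rho a ^ (2*k+1)) by (apply pow_lt; lra).
      pose proof (INR_fact_neq_0 k); pose proof (pos_INR k).
      field; repeat split; lra.
    + apply has_improper_primitive_scal, has_improper_primitive_plus;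
        [apply has_improper_primitive_scal, IH|apply has_improper_primitive_plus].
      * apply has_improper_primitive_odd_boundary; [exact Ha | unfold N; lia].
      * apply has_improper_primitive_scal, has_improper_primitive_odd_boundary;
          [exact Ha | unfold N; lia].
Qed.

Lemma has_improper_primitive_J_diag (a : R) (n : nat) : a > -1 ->
  has_improper_primitive (J a n (n+1))
    (PI * poch (/2) n / (2 * INR (fact n) * rho a ^ (2*n+1))).
Proof.
  intros Ha.
  assert (Hc := rho_pos a Ha).
  apply has_improper_primitive_ext with
    (f := fun x => / 2 * ((J a n (n+1) x + J a (n+1) (n+1) x)
                          + -1 * (J a (n+1) (n+1) x - J a n (n+1) x)))
    (l := / 2 * (PI * poch (/2) n / (INR (fact n) * rho a ^ (2*n+1)) + -1 * 0)).
  - intros x; field.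
  - assert (0 < rho a ^ (2*n+1)) by (apply pow_lt; lra).
    pose proof (INR_fact_neq_0 n); field; split; lra.
  - apply has_improper_primitive_scal, has_improper_primitive_plus.
    + apply has_improper_primitive_J_pair, Ha.
    + apply has_improper_primitive_scal, has_improper_primitive_J_sym, Ha.
Qed.

(* With j = n - k, the boundary term x^(2j+1) / Q^(n+1) trades I(j, n+2) for
   I(j, n+1) and I(j+1, n+2). *)
Lemma has_improper_primitive_J (a : R) (n k : nat) : a > -1 -> (k <= n)%nat ->
  has_improper_primitive (J a (n - k) (n + 1))
    (PI / 2 * tsum (rho a * rho a) n k / rho a ^ (2*n+1)).
Proof.
  intros Ha; assert (Hc := rho_pos a Ha); assert (Hcc := rho_sqr a Ha).
  revert n; induction k as [|k IHk]; intros n Hk.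
  - rewrite Nat.sub_0_r, tsum_0.
    apply has_improper_primitive_ext with (f := J a n (n + 1))
      (l := PI * poch (/2) n / (2 * INR (fact n) * rho a ^ (2*n+1)));
      [reflexivity | | apply has_improper_primitive_J_diag, Ha].
    assert (0 < rho a ^ (2*n+1)) by (apply pow_lt; lra).
    pose proof (INR_fact_neq_0 n); field; split; lra.
  - destruct n as [|n]; [lia|].
    set (j := (n - k)%nat); set (N := (n + 1)%nat).
    apply has_improper_primitive_ext with
      (f := fun x => / (4 * INR N) *
         (((2 * INR j + 1) * J a j N x
           - 4 * INR N * (J a (j+2) (N+1) x + a * J a (j+1) (N+1) x))
          + (4 * INR N - 2 * INR j - 1) * J a (n - k) (n + 1) x)
         + - a * J a (S n - k) (S n + 1) x)
      (l := / (4 * INR N) * (0 + (4 * INR N - 2 * INR j - 1) *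
               (PI / 2 * tsum (rho a * rho a) n k / rho a ^ (2*n+1)))
            + - a * (PI / 2 * tsum (rho a * rho a) (S n) k / rho a ^ (2 * S n + 1))).
    + intros x; replace (S n - k)%nat with (S j) by (unfold j; lia).
      simpl (S n - S k)%nat; fold j; unfold N.
      J_simpl; assert (HQ := Q_pos a x Ha).
      rewrite S_INR; pose proof (pos_INR n); unfold Q in *; field; lra.
    + rewrite tsum_succ by lia.
      unfold j, N; rewrite minus_INR, plus_INR, !S_INR by lia; simpl (INR 0).
      replace (2 * S n + 1)%nat with (2*n + 1 + 2)%nat by lia.
      rewrite (pow_add (rho a) (2*n+1) 2).
      replace (rho a ^ 2) with (rho a * rho a) by ring.
      assert (0 < rho a ^ (2*n+1)) by (apply pow_lt; lra).
      pose proof (pos_INR n); rewrite Hcc; field; repeat split; lra.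
    + apply has_improper_primitive_plus;
        [apply has_improper_primitive_scal, has_improper_primitive_plus
        | apply has_improper_primitive_scal].
      * apply has_improper_primitive_odd_boundary; [exact Ha | unfold j, N; lia].
      * apply has_improper_primitive_scal, IHk; lia.
      * apply IHk; lia.
Qed.

Theorem mainTheorem2 (m : nat) (a : R) (ha : a > -1) :
  improper_int_0_inf (fun x => / (x^4 + 2*a*x^2 + 1)^(m+1))
    (PI / 2 * Pm m a / Rpower (2 * (a + 1)) (INR m + /2))
  /\ Pm m a = sum_f_R0 (fun j => dcoef j m * a^j) m.
Proof.
  split; [|apply Pm_dcoef].
  apply improper_int_of_primitive.
  - intros x; apply (ex_derive_continuous (V := R_NormedModule)).
    assert (HQ := Q_pos a x ha); unfold Q in HQ.
    auto_derive; apply pow_nonzero; simpl in HQ |- *; lra.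
  - apply has_improper_primitive_ext with (f := J a (m - m) (m + 1))
      (l := PI / 2 * tsum (rho a * rho a) m m / rho a ^ (2*m+1)).
    + intros x; unfold J, Q; rewrite Nat.sub_diag; simpl; unfold Rdiv; ring.
    + rewrite rho_sqr, Rpower_rho, Pm_tsum by exact ha; reflexivity.
    + apply has_improper_primitive_J; [exact ha | lia].
Qed.
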